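(* Let $f$ be a holomorphic quadratic self-map of $\mathbb{P}^2$ preserving the line $\ell=\{z_1=0\}$, written $[z_1:z_2:z_3]\mapsto[z_1\widehat L:z_2\widehat L-\widehat P:z_3\widehat L-\widehat Q]$ with $\widehat L$ linear and $\widehat P,\widehat Q$ quadratic homogeneous forms, and set $L(x,y)=\widehat L(1,x,y)$, $P(x,y)=\widehat P(1,x,y)$, $Q(x,y)=\widehat Q(1,x,y)$. Suppose $f$ has exactly four fixed points $p_1,\dots,p_4$ off $\ell$, all non-degenerate, and let $t_i,d_i$ be the trace and determinant of $\mathbf{I}-Df|_{p_i}$. Then $p_1,\dots,p_4$ are common zeros of $P,Q$ with $L(p_i)\ne0$, the Jacobian matrix of $(P,Q)$ at $p_i$ equals $L(p_i)(\mathbf{I}-Df|_{p_i})$ (in the affine coordinates $(x,y)$ of $[1:x:y]$), and $$\sum_{i=1}^4\frac{1}{L(p_i)^2d_i}=0,\quad \sum_{i=1}^4\frac{x(p_i)}{L(p_i)^2d_i}=0,\quad \sum_{i=1}^4\frac{y(p_i)}{L(p_i)^2d_i}=0,\quad \sum_{i=1}^4\frac{t_i}{L(p_i)d_i}=0,\quad \sum_{i=1}^4\frac{1}{L(p_i)d_i}=0.$$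
   Context: A holomorphic quadratic self-map of $\mathbb{P}^2$ is given by three quadratic homogeneous polynomials without common nontrivial zeros; a fixed point $p$ is non-degenerate if $\det(\mathbf{I}-Df|_p)\ne0$. In the affine chart $z_1\ne0$ with coordinates $[1:x:y]$, $f(x,y)=(x-P/L,\,y-Q/L)$. *)

From HB Require Import structures.
From mathcomp Require Import all_boot all_order all_algebra.
Set Implicit Arguments. Unset Strict Implicit. Unset Printing Implicit Defensive.
Import GRing.Theory Num.Theory.
Local Open Scope ring_scope.

(* Bivariate polynomials in the affine coordinates (x,y) of the chart [1:x:y]:
   p : {poly {poly R}}, the inner variable is x, the outer variable is y. *)
Definition PX {R : nzRingType} : {poly {poly R}} := ('X)%:P.
Definition PY {R : nzRingType} : {poly {poly R}} := 'X.

Definition ev2 {R : comNzRingType} (p : {poly {poly R}}) (x y : R) : R :=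
  p.[y%:P].[x].

Definition dX {R : nzRingType} (p : {poly {poly R}}) : {poly {poly R}} :=
  map_poly (@deriv R) p.
Definition dY {R : nzRingType} (p : {poly {poly R}}) : {poly {poly R}} :=
  deriv p.
Definition dXY {R : nzRingType} (j : 'I_2) (p : {poly {poly R}}) :=
  if val j == 0%N then dX p else dY p.

(* Homogeneous coordinates z = [z1:z2:z3] are row vectors 'rV_3 (indices 0,1,2). *)
Definition linform {R : nzRingType} (l : 'rV[R]_3) (z : 'rV[R]_3) : R :=
  \sum_(i < 3) l 0 i * z 0 i.
Definition quadform {R : nzRingType} (A : 'M[R]_3) (z : 'rV[R]_3) : R :=
  \sum_(i < 3) \sum_(j < 3) A i j * z 0 i * z 0 j.

Definition chartvar {R : nzRingType} (i : 'I_3) : {poly {poly R}} :=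
  match val i with 0%N => 1 | 1%N => PX | _ => PY end.
Definition dehom_lin {R : nzRingType} (l : 'rV[R]_3) : {poly {poly R}} :=
  \sum_(i < 3) (l 0 i)%:P%:P * chartvar i.
Definition dehom_quad {R : nzRingType} (A : 'M[R]_3) : {poly {poly R}} :=
  \sum_(i < 3) \sum_(j < 3) (A i j)%:P%:P * chartvar i * chartvar j.

Definition qmap {R : nzRingType} (l : 'rV[R]_3) (A B : 'M[R]_3) (z : 'rV[R]_3)
  : 'rV[R]_3 :=
  \row_(k < 3) (z 0 k * linform l z -
     match val k with 0%N => 0 | 1%N => quadform A z | _ => quadform B z end).

Definition holomorphic {R : nzRingType} (l : 'rV[R]_3) (A B : 'M[R]_3) : Prop :=
  forall z : 'rV[R]_3, qmap l A B z = 0 -> z = 0.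

Definition pt {R : nzRingType} (x y : R) : 'rV[R]_3 :=
  \row_(k < 3) match val k with 0%N => 1 | 1%N => x | _ => y end.

(* [1:x:y] is a fixed point of f in P^2 (equality of points of P^2) *)
Definition fixed_pt {R : nzRingType} (l : 'rV[R]_3) (A B : 'M[R]_3) (x y : R)
  : Prop :=
  exists lam : R, lam != 0 /\ qmap l A B (pt x y) = lam *: pt x y.

(* Derivative Df at (x,y) of the affine expression of f in the chart z1 <> 0:
   f(x,y) = (x - P/L, y - Q/L) = (u/L, v/L) with u = xL - P, v = yL - Q;
   the derivative of a quotient of polynomials u/w is (w du - u dw)/w^2. *)
Definition Df {R : fieldType} (l : 'rV[R]_3) (A B : 'M[R]_3) (x y : R)
  : 'M[R]_2 :=
  let w := dehom_lin l in
  let u := PX * w - dehom_quad A in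
  let v := PY * w - dehom_quad B in
  let c (i : 'I_2) := if val i == 0%N then u else v in
  \matrix_(i < 2, j < 2)
     ((ev2 w x y * ev2 (dXY j (c i)) x y - ev2 (c i) x y * ev2 (dXY j w) x y)
        / (ev2 w x y ^+ 2)).

Definition jacPQ {R : comNzRingType} (A B : 'M[R]_3) (x y : R) : 'M[R]_2 :=
  let c (i : 'I_2) := if val i == 0%N then dehom_quad A else dehom_quad B in
  \matrix_(i < 2, j < 2) ev2 (dXY j (c i)) x y.

From HB Require Import structures.
From mathcomp Require Import all_boot all_order all_algebra.
From mathcomp Require Import ring.
Import GRing.Theory Num.Theory.
Set Implicit Arguments.
Unset Strict Implicit.
Unset Printing Implicit Defensive.
Local Open Scope ring_scope.

(* The four fixed points off the line are the base points p_i of the pencil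
   spanned by the conics P = 0 and Q = 0, and there the Jacobian matrix of
   (P, Q) is L (I - Df), so J := det D(P, Q) equals L^2 d and tr D(P, Q) equals
   L t.  Each of the five identities is therefore an instance of the
   Euler-Jacobi formula  sum_i h(p_i) / J(p_i) = 0  for an affine h (namely
   1, x, y, tr D(P, Q) and L).
   To prove that formula: the midpoint rule is exact for quadratic
   polynomials, so both gradients of P and Q at the midpoint of two base points
   are orthogonal to the chord, and J vanishes at the six midpoints.  As J is
   itself quadratic, an interpolation identity then gives
   J(p_i) * area(p_j, p_k, p_l) = +-K for one constant K.  No three base
   points are collinear (P and Q would vanish on the whole line, making J = 0
   there), so K <> 0 and the sum becomes the alternating sum
   sum_i +-h(p_i) area(p_j, p_k, p_l) / K, the Laplace expansion of a 4x4
   determinant with columns 1, x, y, h, which vanishes as h is affine. *)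

Local Notation i0 := (@ord0 2).
Local Notation i1 := (lift (@ord0 2) (@ord0 1)).
Local Notation i2 := (lift (@ord0 2) (lift (@ord0 1) (@ord0 0))).

Section PlaneGeometry.
Variable R : comNzRingType.
Implicit Types (a b c d u v w : R * R).

Definition dot u v := u.1 * v.1 + u.2 * v.2.
Definition cross u v := u.1 * v.2 - u.2 * v.1.
Definition area a b c := cross (b - a) (c - a).

Definition affine (h : R * R -> R) : Prop :=
  exists e : R * R * R, forall v, h v = e.1.1 + e.1.2 * v.1 + e.2 * v.2.

Lemma area_swap a b c : area b a c = - area a b c.
Proof. rewrite /area /cross /=; ring. Qed.

Lemma area_rotate a b c : area c a b = area a b c.
Proof. rewrite /area /cross /=; ring. Qed.

Lemma pair_neq0 u : u != 0 -> u.1 != 0 \/ u.2 != 0.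
Proof.
case: u => x y /=; rewrite -[0]/(0, 0) xpair_eqE negb_and.
by case/orP; [left | right].
Qed.

Lemma affineD (h g : R * R -> R) :
  affine h -> affine g -> affine (fun v => h v + g v).
Proof.
case=> [[[a0 a1] a2] ha] [[[b0 b1] b2] hb].
by exists (a0 + b0, a1 + b1, a2 + b2) => v; rewrite ha hb /=; ring.
Qed.

(* The Laplace expansion of the determinant with rows (1, x, y, h) at a, b, c, d. *)
Lemma alternating_area_sum_affine (h : R * R -> R) a b c d :
  affine h ->
  h a * area b c d - h b * area a c d + h c * area a b d - h d * area a b c = 0.
Proof. by case=> e he; rewrite !he /area /cross /=; ring. Qed.
End PlaneGeometry.

Section PlaneGeometryField.
Variable R : fieldType.
Implicit Types (a b f g u w : R * R).

Definition mid a b := ((a.1 + b.1) / 2, (a.2 + b.2) / 2).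

Lemma cross_eq0_of_dot_eq0 f g u :
  u != 0 -> dot f u = 0 -> dot g u = 0 -> cross f g = 0.
Proof.
move=> /pair_neq0 u_neq0 fu gu.
have cross_u1 : cross f g * u.1 = g.2 * dot f u - f.2 * dot g u.
  by rewrite /cross /dot; ring.
have cross_u2 : cross f g * u.2 = f.1 * dot g u - g.1 * dot f u.
  by rewrite /cross /dot; ring.
rewrite fu gu !mulr0 subrr in cross_u1 cross_u2.
by case: u_neq0 => u_neq0; [move/eqP: cross_u1 | move/eqP: cross_u2];
  rewrite mulf_eq0 (negbTE u_neq0) orbF => /eqP.
Qed.

Lemma cross_eq0_scale u w :
  u != 0 -> cross u w = 0 -> exists t, w = (t * u.1, t * u.2).
Proof.
rewrite /cross => /pair_neq0 u_neq0 /eqP; rewrite subr_eq0 => /eqP uw.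
case: u_neq0 => [u1_neq0 | u2_neq0].
- exists (w.1 / u.1); rewrite [w]surjective_pairing mulfVK //; congr pair.
  by apply: (mulfI u1_neq0); rewrite uw; field.
- exists (w.2 / u.2); rewrite [w]surjective_pairing mulfVK //; congr pair.
  by apply: (mulfI u2_neq0); rewrite -uw; field.
Qed.
End PlaneGeometryField.

Section Chart.
Variable R : comNzRingType.
Implicit Types (l : 'rV[R]_3) (A B : 'M[R]_3) (p : {poly {poly R}}) (v : R * R).

Lemma dX_horner p (c : R) : (dX p).[c%:P] = (p.[c%:P])^`().
Proof.
rewrite /dX (@horner_coef_wide _ (size p) (map_poly _ p)) ?size_poly //.
rewrite (@horner_coef_wide _ (size p) p) // raddf_sum; apply: eq_bigr => i _.
by rewrite coef_map /= -rmorphXn /= derivM derivC mulr0 addr0.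
Qed.

Lemma chartvar0 : chartvar i0 = 1 :> {poly {poly R}}. Proof. by []. Qed.
Lemma chartvar1 : chartvar i1 = PX :> {poly {poly R}}. Proof. by []. Qed.
Lemma chartvar2 : chartvar i2 = PY :> {poly {poly R}}. Proof. by []. Qed.

Lemma dehom_linE l :
  dehom_lin l = (l 0 i0)%:P%:P + (l 0 i1)%:P%:P * PX + (l 0 i2)%:P%:P * PY.
Proof.
rewrite /dehom_lin !big_ord_recl big_ord0 chartvar0 chartvar1 chartvar2.
by rewrite mulr1 addr0 !addrA.
Qed.

Definition conic A v : R := ev2 (dehom_quad A) v.1 v.2.

Definition conic_grad A v : R * R :=
  (ev2 (dX (dehom_quad A)) v.1 v.2, ev2 (dY (dehom_quad A)) v.1 v.2).

Definition base_point A B v := conic A v = 0 /\ conic B v = 0.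

Definition jacobian A B v := cross (conic_grad A v) (conic_grad B v).

Lemma conicE A v : conic A v = A i0 i0 + (A i0 i1 + A i1 i0) * v.1
  + (A i0 i2 + A i2 i0) * v.2 + A i1 i1 * v.1 ^+ 2
  + (A i1 i2 + A i2 i1) * v.1 * v.2 + A i2 i2 * v.2 ^+ 2.
Proof.
rewrite /conic /ev2 /dehom_quad !big_ord_recl !big_ord0.
rewrite chartvar0 chartvar1 chartvar2 /PX /PY.
by rewrite !(hornerD, hornerM, hornerX, hornerC) !addr0 !mulr1; ring.
Qed.

Lemma conic_gradE A v : conic_grad A v =
  (A i0 i1 + A i1 i0 + 2 * A i1 i1 * v.1 + (A i1 i2 + A i2 i1) * v.2,
   A i0 i2 + A i2 i0 + (A i1 i2 + A i2 i1) * v.1 + 2 * A i2 i2 * v.2).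
Proof.
rewrite /conic_grad /ev2 dX_horner /dY /dehom_quad !big_ord_recl !big_ord0.
rewrite chartvar0 chartvar1 chartvar2 /PX /PY.
by congr pair; rewrite !(derivE, hornerD, hornerN, hornerM, hornerX, hornerC); ring.
Qed.

Lemma affine_conic_grad A :
  affine (fun v => (conic_grad A v).1) /\ affine (fun v => (conic_grad A v).2).
Proof.
split; [exists (A i0 i1 + A i1 i0, 2 * A i1 i1, A i1 i2 + A i2 i1)
       | exists (A i0 i2 + A i2 i0, A i1 i2 + A i2 i1, 2 * A i2 i2)];
  by move=> v; rewrite conic_gradE.
Qed.

Lemma affine_dehom_lin l : affine (fun v => ev2 (dehom_lin l) v.1 v.2).
Proof.
exists (l 0 i0, l 0 i1, l 0 i2) => v.
by rewrite dehom_linE /ev2 /PX /PY !(hornerD, hornerM, hornerX, hornerC).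
Qed.
End Chart.

Section Conics.
Variable R : fieldType.
Hypothesis two_neq0 : 2 != 0 :> R.
Implicit Types (A B C : 'M[R]_3) (a b c d p q r u : R * R).

Lemma conic_midpoint_rule C a b :
  conic C b - conic C a = dot (conic_grad C (mid a b)) (b - a).
Proof. by rewrite !conicE conic_gradE /dot /mid /=; field. Qed.

(* On the line p + s u the conic is quadratic in s; eliminate the s^2 term
   between s = 1 and s = t. *)
Lemma conic_secant C p u t :
  (t ^+ 2 - t) * dot (conic_grad C p) u =
  t ^+ 2 * (conic C (p + u) - conic C p)
  - (conic C (p + (t * u.1, t * u.2)) - conic C p).
Proof. rewrite !conicE conic_gradE /dot /=; ring. Qed.

Lemma jacobian_mid_eq0 A B a b :
  base_point A B a -> base_point A B b -> a != b -> jacobian A B (mid a b) = 0.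
Proof.
move=> [Aa Ba] [Ab Bb] ab; apply: (@cross_eq0_of_dot_eq0 _ _ _ (b - a)).
- by rewrite subr_eq0 eq_sym.
- by rewrite -conic_midpoint_rule Aa Ab subrr.
- by rewrite -conic_midpoint_rule Ba Bb subrr.
Qed.

Lemma jacobian_eq0_of_collinear A B p q r :
  base_point A B p -> base_point A B q -> base_point A B r ->
  p != q -> p != r -> q != r -> area p q r = 0 -> jacobian A B p = 0.
Proof.
move=> [Ap Bp] [Aq Bq] [Ar Br] pq pr qr.
have u_neq0 : q - p != 0 by rewrite subr_eq0 eq_sym.
move=> /(cross_eq0_scale u_neq0) [t rE].
have {}rE : r = p + (t * (q - p).1, t * (q - p).2) by rewrite -rE subrKC.
have t_neq0 : t != 0.
  by apply: contraNneq pr => t0; rewrite rE t0 !mul0r addr0.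
have t_neq1 : t != 1.
  by apply: contraNneq qr => t1; rewrite rE t1 !mul1r -surjective_pairing subrKC.
have tangent C : conic C p = 0 -> conic C q = 0 -> conic C r = 0 ->
    dot (conic_grad C p) (q - p) = 0.
  have tt_neq0 : t ^+ 2 - t != 0.
    by rewrite (_ : t ^+ 2 - t = t * (t - 1)) ?mulf_neq0 ?subr_eq0 //; ring.
  move=> Cp Cq Cr; move: (conic_secant C p (q - p) t).
  rewrite subrKC -rE Cp Cq Cr subrr mulr0 subrr => /eqP.
  by rewrite mulf_eq0 (negbTE tt_neq0) => /eqP.
by apply: (cross_eq0_of_dot_eq0 u_neq0); apply: tangent.
Qed.

(* An identity between the values at vertices and at midpoints that holds for
   every quadratic function of the plane, the Jacobian being one. *)
Lemma jacobian_interpolation A B a b c d :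
  jacobian A B a * area b c d + jacobian A B b * area a c d =
  (area a c d + area b c d) * jacobian A B (mid a b)
  - area a b d * (jacobian A B (mid a c) - jacobian A B (mid b c))
  + area a b c * (jacobian A B (mid a d) - jacobian A B (mid b d)).
Proof. by rewrite /jacobian /cross !conic_gradE /area /cross /mid /=; field. Qed.
End Conics.

Section FourBasePoints.
Variables (R : fieldType) (A B : 'M[R]_3) (p : 'I_4 -> R * R).
Hypothesis two_neq0 : 2 != 0 :> R.
Hypothesis p_inj : injective p.
Hypothesis p_base : forall i, base_point A B (p i).
Hypothesis jacobian_p_neq0 : forall i, jacobian A B (p i) != 0.
Local Notation J := (jacobian A B).

Lemma area_base_points_neq0 i j k :
  i != j -> i != k -> j != k -> area (p i) (p j) (p k) != 0.
Proof.
move=> ij ik jk; apply: contra (jacobian_p_neq0 i) => /eqP area0; apply/eqP.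
by apply: (jacobian_eq0_of_collinear (p_base i) (p_base j) (p_base k));
  rewrite ?(inj_eq p_inj).
Qed.

Lemma jacobian_vertex_relation i j k l :
  i != j -> i != k -> i != l -> j != k -> j != l ->
  J (p i) * area (p j) (p k) (p l) + J (p j) * area (p i) (p k) (p l) = 0.
Proof.
have J_mid u v : u != v -> J (mid (p u) (p v)) = 0.
  by move=> uv; apply: jacobian_mid_eq0; rewrite ?(inj_eq p_inj).
by move=> *; rewrite jacobian_interpolation // !J_mid //; ring.
Qed.

Theorem euler_jacobi (h : R * R -> R) :
  affine h -> \sum_(i < 4) h (p i) / J (p i) = 0.
Proof.
pose k0 : 'I_4 := ord0.
pose k1 : 'I_4 := lift ord0 ord0.
pose k2 : 'I_4 := lift ord0 (lift ord0 ord0).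
pose k3 : 'I_4 := lift ord0 (lift ord0 (lift ord0 ord0)).
move=> h_aff; rewrite !big_ord_recl big_ord0 addr0 -/k0 -/k1 -/k2 -/k3.
have r1 := @jacobian_vertex_relation k0 k1 k2 k3 isT isT isT isT isT.
have r2 := @jacobian_vertex_relation k0 k2 k1 k3 isT isT isT isT isT.
have r3 := @jacobian_vertex_relation k0 k3 k1 k2 isT isT isT isT isT.
rewrite area_swap in r2; rewrite area_rotate in r3.
have lin_solve (x y z : R) : z != 0 -> x + y * z = 0 -> y = - x / z.
  move=> z_neq0 e; rewrite -(mulfK z_neq0 y); congr (_ / _).
  by apply/eqP; rewrite -addr_eq0 addrC e.
have D0 := @area_base_points_neq0 k1 k2 k3 isT isT isT.
have D1 := @area_base_points_neq0 k0 k2 k3 isT isT isT.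
have D2 := @area_base_points_neq0 k0 k1 k3 isT isT isT.
have D3 := @area_base_points_neq0 k0 k1 k2 isT isT isT.
rewrite (lin_solve _ _ _ D1 r1) (lin_solve _ _ _ D2 r2) (lin_solve _ _ _ D3 r3).
have J0 := jacobian_p_neq0 k0.
transitivity ((h (p k0) * area (p k1) (p k2) (p k3)
    - h (p k1) * area (p k0) (p k2) (p k3) + h (p k2) * area (p k0) (p k1) (p k3)
    - h (p k3) * area (p k0) (p k1) (p k2)) / (J (p k0) * area (p k1) (p k2) (p k3))).
  by field; rewrite !oppr_eq0 !mulf_eq0 !oppr_eq0 !negb_or D0 D1 D2 D3 J0.
by rewrite alternating_area_sum_affine // mul0r.
Qed.
End FourBasePoints.

Lemma det_mx22 (R : comNzRingType) (M : 'M[R]_2) :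
  \det M = M ord0 ord0 * M (lift ord0 ord0) (lift ord0 ord0)
           - M ord0 (lift ord0 ord0) * M (lift ord0 ord0) ord0.
Proof.
rewrite (expand_det_row _ ord0) !big_ord_recl big_ord0 /cofactor !det_mx11 !mxE /=.
rewrite (_ : lift ord0 0 = lift ord0 ord0 :> 'I_2); last exact: val_inj.
rewrite (_ : lift (lift ord0 ord0) 0 = ord0 :> 'I_2); last exact: val_inj.
by rewrite /bump /= expr0 expr1 addr0 mul1r mulN1r mulrN.
Qed.

Section QuadraticMap.
Variable R : comNzRingType.
Implicit Types (l : 'rV[R]_3) (A B : 'M[R]_3) (v : R * R).

Lemma pt0 (x y : R) : pt x y 0 i0 = 1. Proof. by rewrite mxE. Qed.
Lemma pt1 (x y : R) : pt x y 0 i1 = x. Proof. by rewrite mxE. Qed.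
Lemma pt2 (x y : R) : pt x y 0 i2 = y. Proof. by rewrite mxE. Qed.

Lemma quadform_pt A v : quadform A (pt v.1 v.2) = conic A v.
Proof.
by rewrite conicE /quadform !big_ord_recl !big_ord0 pt0 pt1 pt2 !addr0; ring.
Qed.

Lemma linform_pt l v : linform l (pt v.1 v.2) = ev2 (dehom_lin l) v.1 v.2.
Proof.
rewrite /linform !big_ord_recl big_ord0 pt0 pt1 pt2 addr0 dehom_linE /ev2 /PX /PY.
by rewrite !(hornerD, hornerM, hornerX, hornerC); ring.
Qed.

Lemma fixed_pt_base l A B v :
  fixed_pt l A B v.1 v.2 -> base_point A B v /\ ev2 (dehom_lin l) v.1 v.2 != 0.
Proof.
case=> lam [lam_neq0 fixed].
have coord k : qmap l A B (pt v.1 v.2) 0 k = lam * pt v.1 v.2 0 k.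
  by rewrite fixed mxE.
have sub_eq0 (x c : R) : x - c = x -> c = 0.
  by move=> e; rewrite -[c]opprK -[- c](addKr x) e addNr oppr0.
move: (coord i0) (coord i1) (coord i2); rewrite !mxE /= !quadform_pt linform_pt.
rewrite mul1r subr0 mulr1 => ->; rewrite ![lam * _]mulrC => /sub_eq0 A0 /sub_eq0 B0.
by split.
Qed.

Lemma det_jacPQ A B v : \det (jacPQ A B v.1 v.2) = jacobian A B v.
Proof. by rewrite det_mx22 !mxE. Qed.

Lemma affine_trace_jacPQ A B : affine (fun v => \tr (jacPQ A B v.1 v.2)).
Proof.
have [e he] := affineD (affine_conic_grad A).1 (affine_conic_grad B).2.
by exists e => v; rewrite -he /mxtrace !big_ord_recl big_ord0 !mxE addr0.
Qed.
End QuadraticMap.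

Lemma jacPQ_base_point (R : fieldType) (l : 'rV[R]_3) (A B : 'M[R]_3) (v : R * R) :
  base_point A B v -> ev2 (dehom_lin l) v.1 v.2 != 0 ->
  jacPQ A B v.1 v.2 = ev2 (dehom_lin l) v.1 v.2 *: (1 - Df l A B v.1 v.2).
Proof.
rewrite /base_point /conic /ev2 => -[A0 B0] L_neq0.
apply/matrixP => i j; rewrite !mxE /dXY.
case: i => [[|[|//]] ?]; case: j => [[|[|//]] ?] /=; rewrite /ev2 ?dX_horner /dY /PX /PY.
all: rewrite !(derivE, hornerD, hornerN, hornerM, hornerX, hornerC).
all: by rewrite ?A0 ?B0; field.
Qed.

Theorem mainTheorem6 (R : numClosedFieldType) (l : 'rV[R]_3) (A B : 'M[R]_3)
    (p : 'I_4 -> R * R) :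
  holomorphic l A B ->
  injective p ->
  (forall x y : R, fixed_pt l A B x y <-> exists i, p i = (x, y)) ->
  (forall i, \det (1 - Df l A B (p i).1 (p i).2) != 0) ->
  let Lp i := ev2 (dehom_lin l) (p i).1 (p i).2 in
  let M i := 1 - Df l A B (p i).1 (p i).2 in
  let t i := \tr (M i) in
  let d i := \det (M i) in
  (forall i, [/\ ev2 (dehom_quad A) (p i).1 (p i).2 = 0,
                 ev2 (dehom_quad B) (p i).1 (p i).2 = 0,
                 Lp i != 0 &
                 jacPQ A B (p i).1 (p i).2 = Lp i *: M i]) /\
  [/\ \sum_(i < 4) (Lp i ^+ 2 * d i)^-1 = 0,
      \sum_(i < 4) (p i).1 / (Lp i ^+ 2 * d i) = 0,
      \sum_(i < 4) (p i).2 / (Lp i ^+ 2 * d i) = 0,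
      \sum_(i < 4) t i / (Lp i * d i) = 0 &
      \sum_(i < 4) (Lp i * d i)^-1 = 0].
Proof.
move=> _ p_inj fixed_p d_neq0 Lp M t d.
have base_L i : base_point A B (p i) /\ Lp i != 0.
  by apply: fixed_pt_base; apply/fixed_p; exists i; rewrite -surjective_pairing.
have L_neq0 i : Lp i != 0 by case: (base_L i).
have jacM i : jacPQ A B (p i).1 (p i).2 = Lp i *: M i.
  by case: (base_L i) => ? ?; apply: jacPQ_base_point.
have J_eq i : jacobian A B (p i) = Lp i ^+ 2 * d i.
  by rewrite -det_jacPQ jacM detZ.
have EJ h : affine h -> \sum_(i < 4) h (p i) / (Lp i ^+ 2 * d i) = 0.
  move=> h_aff; under eq_bigr do rewrite -J_eq.
  apply: euler_jacobi h_aff => // [|i|i]; first by rewrite pnatr_eq0.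
    by case: (base_L i).
  by rewrite J_eq mulf_neq0 ?expf_neq0 ?L_neq0 ?d_neq0.
split=> [i | ]; first by case: (base_L i) => -[? ?] ?; split.
have aff_1 : affine (fun _ : R * R => 1) by exists (1, 0, 0) => v /=; ring.
have aff_x : affine (fun v : R * R => v.1) by exists (0, 1, 0) => v /=; ring.
have aff_y : affine (fun v : R * R => v.2) by exists (0, 0, 1) => v /=; ring.
split.
- by rewrite -[RHS](EJ _ aff_1); apply: eq_bigr => i _; rewrite div1r.
- exact: EJ aff_x.
- exact: EJ aff_y.
- rewrite -[RHS](EJ _ (affine_trace_jacPQ A B)); apply: eq_bigr => i _.
  by rewrite jacM mxtraceZ -/(t i); field; rewrite L_neq0 d_neq0.
- rewrite -[RHS](EJ _ (affine_dehom_lin l)); apply: eq_bigr => i _.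
  by rewrite -/(Lp i); field; rewrite L_neq0 d_neq0.
Qed.
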